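(* Let $\mathbf{P}=(\Omega,\preccurlyeq_{\mathbf{P}})$ be a poset on a finite set $\Omega$. The following are equivalent: (1) $\mathbf{P}$ is hierarchical; (2) for any $D,B\in\mathcal{I}(\overline{\mathbf{P}})$, $|D|=|B|$ implies $|\min_{\mathbf{P}}(D)|=|\min_{\mathbf{P}}(B)|$; (3) for any $A\subseteq\Omega$ such that $a\preccurlyeq_{\mathbf{P}}b$ for all $a\in A$, $b\in\Omega-A$, it holds that $c\preccurlyeq_{\mathbf{P}}d$ for all $c\in A-\max_{\mathbf{P}}(A)$, $d\in\max_{\mathbf{P}}(A)$; (4) for any $I,J\in\mathcal{I}(\mathbf{P})$, $|I|=|J|$ implies $|\max_{\mathbf{P}}(I)|=|\max_{\mathbf{P}}(J)|$; (5) for any $B\subseteq\Omega$ such that $a\preccurlyeq_{\mathbf{P}}b$ for all $a\in\Omega-B$, $b\in B$, it holds that $c\preccurlyeq_{\mathbf{P}}d$ for all $c\in\min_{\mathbf{P}}(B)$, $d\in B-\min_{\mathbf{P}}(B)$.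
   Context: $\mathcal{I}(\mathbf{P})$ is the set of ideals (down-closed subsets) of $\mathbf{P}$; $\overline{\mathbf{P}}$ is the dual poset ($u\preccurlyeq_{\overline{\mathbf{P}}}v\iff v\preccurlyeq_{\mathbf{P}}u$), so $\mathcal{I}(\overline{\mathbf{P}})$ is the set of up-closed subsets of $\mathbf{P}$. $\max_{\mathbf{P}}(B)$, $\min_{\mathbf{P}}(B)$ are the sets of maximal, minimal elements of $B$. $\mathrm{len}(y)$ is the largest cardinality of a chain in $\mathbf{P}$ with greatest element $y$; $\mathbf{P}$ is hierarchical if for all $u,v$ with $\mathrm{len}(u)+1\leqslant\mathrm{len}(v)$ we have $u\preccurlyeq_{\mathbf{P}}v$. *)

(* a finite poset is a finPOrderType; Omega = the whole type. *)
From mathcomp Require Import all_boot all_order.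
Set Implicit Arguments. Unset Strict Implicit. Unset Printing Implicit Defensive.
Import Order.TTheory.
Local Open Scope order_scope.

Section PosetDefs.
Context {disp : Order.disp_t} {T : finPOrderType disp}.

Definition is_ideal (A : {set T}) : bool :=
  [forall x, forall y, ((y \in A) && (x <= y)) ==> (x \in A)].

(* I(dual P): up-closed subsets *)
Definition is_upset (A : {set T}) : bool :=
  [forall x, forall y, ((x \in A) && (x <= y)) ==> (y \in A)].

Definition pmax (B : {set T}) : {set T} :=
  [set x in B | [forall y in B, (x <= y) ==> (y == x)]].
Definition pmin (B : {set T}) : {set T} :=
  [set x in B | [forall y in B, (y <= x) ==> (y == x)]].

Definition is_chain (C : {set T}) : bool :=
  [forall x in C, forall y in C, (x <= y) || (y <= x)].

Definition len (y : T) : nat :=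
  \max_(C : {set T} | is_chain C && (y \in C) && [forall x in C, x <= y]) #|C|.

Definition hierarchical : Prop :=
  forall u v : T, (len u + 1 <= len v)%N -> u <= v.

End PosetDefs.

(* Each condition is equivalent to [weakly_ordered]: a < b implies a < c or
   c < b for every c, i.e. the poset is a stack of antichains, each lying
   entirely below the next.  Hierarchical posets are such stacks with the
   fibres of [len] as levels; conversely, in a weak order, if len u < len v,
   the predecessor w of v on a longest chain ending at v has len u <= len w,
   so w < u is impossible and hence u < v.
   In a weak order the non-maximal elements of a lower cut lie below its
   maximal ones, and two distinct ideals of equal size have the same
   non-maximal elements; this gives (3) and (4).  Conversely, (3) forces
   weak order by peeling off the maximal layer of a lower cut repeatedly.
   Against (4): if a < b while neither a < c nor c < b, the principal ideal
   of b and the ideal obtained from it by replacing b with a minimal y <= c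
   outside {z | z < b} have the same size, but the first has one maximal
   element and the second at least two (y and a maximal element above a).
   Conditions (2) and (5) are (4) and (3) for the dual order. *)

From mathcomp Require Import all_boot all_order.
Set Implicit Arguments. Unset Strict Implicit. Unset Printing Implicit Defensive.
Import Order.TTheory.
Local Open Scope order_scope.

Section MaximalElements.
Context {disp : Order.disp_t} {T : finPOrderType disp}.
Implicit Types (A B : {set T}) (x y : T).

Lemma pmaxP B x :
  reflect (x \in B /\ forall y, y \in B -> x <= y -> y = x) (x \in pmax B).
Proof.
rewrite inE; apply: (iffP andP) => [[xB /forall_inP maxx]|[xB maxx]].
  by split=> // y yB xy; apply/eqP/(implyP (maxx y yB)).
by split=> //; apply/forall_inP => y yB; apply/implyP => /(maxx y yB)->.
Qed.

Lemma pmax_subset A : pmax A \subset A.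
Proof. by apply/subsetP => x /pmaxP[]. Qed.

Lemma card_pmax_setD A : #|pmax A| + #|A :\: pmax A| = #|A|.
Proof. by rewrite -(cardsID (pmax A) A) (setIidPr (pmax_subset A)). Qed.

Lemma exists_pmax_ge A x0 : x0 \in A -> exists2 x, x \in pmax A & x0 <= x.
Proof.
move=> Ax0; have x0_up : x0 \in [set z in A | x0 <= z] by rewrite !inE Ax0 /=.
have [x /setIdP[xA x0x] xmax] := arg_maxnP (fun z => #|[set t | t <= z]|) x0_up.
exists x => //; apply/pmaxP; split=> // y yA xy; apply/eqP; apply: contraT => yx.
have yup : y \in [set z in A | x0 <= z] by rewrite inE yA (le_trans x0x xy).
have /= le_yx := xmax y yup.
suff /proper_card : [set t | t <= x] \proper [set t | t <= y] by rewrite ltnNge le_yx.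
apply/properP; split.
  by apply/subsetP => t; rewrite !inE => /le_trans; apply.
by exists y; rewrite !inE ?lexx //; apply: contra yx => yx; rewrite eq_le yx.
Qed.

Lemma nonmaximal_lt B x : x \in B :\: pmax B -> exists2 y, y \in B & x < y.
Proof.
rewrite !inE => /andP[+ xB]; rewrite xB /= => /forall_inPn[y yB].
by rewrite negb_imply => /andP[xy yx]; exists y; rewrite // lt_def yx.
Qed.

Lemma lt_in_setD_pmax B x y : x \in B -> y \in B -> x < y -> x \in B :\: pmax B.
Proof.
move=> xB yB xy; rewrite inE xB andbT; apply/pmaxP => -[_ /(_ y yB (ltW xy)) yx].
by move: xy; rewrite yx ltxx.
Qed.

Lemma proper_setD_pmax A x : x \in A -> A :\: pmax A \proper A.
Proof.
move=> xA; have [m mmax _] := exists_pmax_ge xA.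
apply/properP; split; first exact: subsetDl.
by exists m; [case/pmaxP: mmax | rewrite inE mmax].
Qed.

End MaximalElements.

Section MinimalElements.
Context {disp : Order.disp_t} {T : finPOrderType disp}.
Implicit Types (A B : {set T}) (x y : T).

(* [pmax] in [T^d] is convertible to [pmin] in [T]. *)
Lemma pminP B x :
  reflect (x \in B /\ forall y, y \in B -> y <= x -> y = x) (x \in pmin B).
Proof. exact: (pmaxP (T:=T^d)). Qed.

Lemma exists_pmin_le A x0 : x0 \in A -> exists2 x, x \in pmin A & x <= x0.
Proof. exact: (exists_pmax_ge (T:=T^d)). Qed.

End MinimalElements.

Section WeakOrders.
Context {disp : Order.disp_t} {T : finPOrderType disp}.
Implicit Types (A I J : {set T}) (a b c d x y z : T).

Definition weakly_ordered := forall a b c : T, a < b -> (a < c) || (c < b).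

Definition lower_cut A := forall a b, a \in A -> b \notin A -> a <= b.

Definition cut_nonmax_le_max :=
  forall A, lower_cut A -> forall c d, c \in A :\: pmax A -> d \in pmax A -> c <= d.

Definition ideal_card_pmax_card :=
  forall I J, is_ideal I -> is_ideal J -> #|I| = #|J| -> #|pmax I| = #|pmax J|.

Lemma weakly_ordered_cut : weakly_ordered -> cut_nonmax_le_max.
Proof.
move=> wo A _ c d /nonmaximal_lt[z zA cz] dmax.
case/orP: (wo c z d cz) => [/ltW //|dz].
by case/pmaxP: (dmax) => dA _; case/setDP: (lt_in_setD_pmax dA zA dz); rewrite dmax.
Qed.

Lemma lower_cut_setD_pmax A :
  cut_nonmax_le_max -> lower_cut A -> lower_cut (A :\: pmax A).
Proof.
move=> cut cutA x y xAD; rewrite inE negb_and negbK => /orP[ymax|]; last first.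
  by apply: cutA; case/setDP: xAD.
exact: cut xAD ymax.
Qed.

Lemma cut_weakly_ordered : cut_nonmax_le_max -> weakly_ordered.
Proof.
move=> cut a b c ab.
suff: forall n A, (#|A| <= n)%N -> lower_cut A ->
    a \in A -> b \in A -> c \in A -> (a < c) || (c < b).
  by apply; rewrite ?cardsT ?inE // => x y _; rewrite inE.
elim=> [|n IH] A; first by rewrite leqn0 => /eqP/cards0_eq-> _; rewrite inE.
move=> cardA cutA aA bA cA.
have aD : a \in A :\: pmax A := lt_in_setD_pmax aA bA ab.
case cmax: (c \in pmax A).
  have := cut A cutA a c aD cmax; rewrite le_eqVlt => /orP[/eqP<-|->];
  by rewrite ?ab ?orbT.
have cD : c \in A :\: pmax A by rewrite inE cmax cA.
case bmax: (b \in pmax A).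
  have := cut A cutA c b cD bmax; rewrite le_eqVlt => /orP[/eqP->|->];
  by rewrite ?ab ?orbT.
apply: (IH (A :\: pmax A)) => //; last by rewrite inE bmax.
  by rewrite -ltnS (leq_trans (proper_card (proper_setD_pmax aA)) cardA).
exact: lower_cut_setD_pmax.
Qed.

Lemma weakly_ordered_cutP : weakly_ordered <-> cut_nonmax_le_max.
Proof. by split; [apply: weakly_ordered_cut | apply: cut_weakly_ordered]. Qed.

Lemma is_idealP I :
  reflect (forall x y, y \in I -> x <= y -> x \in I) (is_ideal I).
Proof.
apply: (iffP forallP) => [idI x y yI xy|idI x].
  by move/forallP/(_ y): (idI x); rewrite yI xy.
by apply/forallP => y; apply/implyP => /andP[]; apply: idI.
Qed.

Lemma setD_pmax_subset I J q : weakly_ordered -> is_ideal I -> is_ideal J ->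
  q \in J -> q \notin I -> I :\: pmax I \subset J :\: pmax J.
Proof.
move=> wo /is_idealP idI /is_idealP idJ qJ qI.
apply/subsetP => x /nonmaximal_lt[m mI xm].
case/orP: (wo x m q xm) => [xq|qm]; last by rewrite (idI q m mI (ltW qm)) in qI.
exact: lt_in_setD_pmax (idJ x q qJ (ltW xq)) qJ xq.
Qed.

Lemma weakly_ordered_ideal : weakly_ordered -> ideal_card_pmax_card.
Proof.
move=> wo I J idI idJ cardIJ.
have [->//|neqIJ] := eqVneq I J.
have [q qJ qI] : exists2 q, q \in J & q \notin I.
  by apply/subsetPn; apply: contra neqIJ => JI; rewrite eq_sym eqEcard JI cardIJ leqnn.
have [p pI pJ] : exists2 p, p \in I & p \notin J.
  by apply/subsetPn; apply: contra neqIJ => IJ; rewrite eqEcard IJ cardIJ leqnn.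
have lowerIJ : I :\: pmax I = J :\: pmax J.
  apply/eqP; rewrite eqEsubset.
  by rewrite (setD_pmax_subset wo idI idJ qJ qI) (setD_pmax_subset wo idJ idI pI pJ).
apply/eqP; rewrite -(eqn_add2r #|I :\: pmax I|) card_pmax_setD.
by rewrite lowerIJ card_pmax_setD cardIJ.
Qed.

Lemma is_ideal_setU1 I y :
  is_ideal I -> (forall x, x < y -> x \in I) -> is_ideal (y |: I).
Proof.
move=> /is_idealP idI below; apply/is_idealP => x z.
case/setU1P => [->|zI] xz; last by rewrite setU1r // (idI x z zI xz).
by move: xz; rewrite le_eqVlt => /orP[/eqP->|/below/setU1r->]; rewrite ?setU11.
Qed.

Lemma is_ideal_slt b : is_ideal [set z | z < b].
Proof. by apply/is_idealP => x z; rewrite !inE => zb xz; apply: le_lt_trans xz zb. Qed.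

Lemma ideal_weakly_ordered : ideal_card_pmax_card -> weakly_ordered.
Proof.
move=> inv a b c ab; apply: contraT; rewrite negb_or => /andP[nac ncb].
pose Z := [set z | z < b].
have [m /pmaxP[mZ mmax] am] : exists2 m, m \in pmax Z & a <= m.
  by apply: exists_pmax_ge; rewrite inE.
have [y /pminP[yZ ymin] yc] : exists2 y, y \in pmin (~: Z) & y <= c.
  by apply: exists_pmin_le; rewrite !inE.
rewrite !inE in mZ yZ.
have idb : is_ideal (b |: Z).
  by apply: is_ideal_setU1 (is_ideal_slt b) _ => x; rewrite inE.
have idy : is_ideal (y |: Z).
  apply: is_ideal_setU1 (is_ideal_slt b) _ => x xy; rewrite inE.
  have [//|xb] := boolP (x < b).
  have x_eq_y : x = y by apply: ymin; rewrite ?inE ?ltW.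
  by rewrite x_eq_y ltxx in xy.
have same_card : #|b |: Z| = #|y |: Z| by rewrite !cardsU1 !inE ltxx (negbTE yZ).
have pmax_b : pmax (b |: Z) \subset [set b].
  apply/subsetP => x xmax; rewrite inE.
  have /setU1P[->//|xZ] := subsetP (pmax_subset _) x xmax.
  have xb : x < b by rewrite inE in xZ.
  by case/setDP: (lt_in_setD_pmax (setU1r b xZ) (setU11 b Z) xb); rewrite xmax.
have ym : y != m by apply: contraNneq yZ => ->.
have pmax_y : [set y; m] \subset pmax (y |: Z).
  apply/subsetP => x /set2P[]->; apply/pmaxP; split; rewrite ?setU11 ?setU1r ?inE //.
    move=> z /setU1P[//|zZ] yz; rewrite inE in zZ.
    by rewrite (le_lt_trans yz zZ) in yZ.
  move=> z /setU1P[->|zZ] mz; last exact: mmax.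
  have my : m < y by rewrite lt_neqAle eq_sym ym mz.
  by rewrite (le_lt_trans am (lt_le_trans my yc)) in nac.
have := subset_leq_card pmax_y; have := subset_leq_card pmax_b.
by rewrite cards1 cards2 ym (inv _ _ idb idy same_card) => le1 /leq_trans/(_ le1).
Qed.

Lemma weakly_ordered_idealP : weakly_ordered <-> ideal_card_pmax_card.
Proof. by split; [apply: weakly_ordered_ideal | apply: ideal_weakly_ordered]. Qed.

End WeakOrders.

Section Height.
Context {disp : Order.disp_t} {T : finPOrderType disp}.
Implicit Types (C : {set T}) (u v w x y z : T).

Definition topped_chain y C := is_chain C && (y \in C) && [forall x in C, x <= y].

Lemma topped_chainP y C :
  reflect [/\ {in C &, forall u v, (u <= v) || (v <= u)}, y \in C
            & {in C, forall x, x <= y}]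
          (topped_chain y C).
Proof.
rewrite /topped_chain -andbA; apply: (iffP and3P) => [[ch yC top]|[ch yC top]].
  split=> // [u v uC vC|x xC]; last exact: (forall_inP top).
  by move/forall_inP/(_ u uC)/forall_inP: ch; apply.
split=> //; last exact/forall_inP.
by apply/forall_inP => u uC; apply/forall_inP => v vC; apply: ch.
Qed.

Lemma topped_chain1 y : topped_chain y [set y].
Proof.
by apply/topped_chainP; split=> [u v /set1P-> /set1P->|//|x /set1P->];
  rewrite ?lexx ?set11.
Qed.

Lemma topped_chain_len y C : topped_chain y C -> (#|C| <= len y)%N.
Proof. exact: (@leq_bigmax_cond _ (topped_chain y) (fun C => #|C|)). Qed.

Lemma len_topped_chain y : exists2 C, topped_chain y C & #|C| = len y.
Proof.
have [|C] := @eq_bigmax_cond _ (topped_chain y) (fun C => #|C|).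
  by apply/card_gt0P; exists [set y]; apply: topped_chain1.
by exists C.
Qed.

Lemma len_gt0 y : (0 < len y)%N.
Proof. by have := topped_chain_len (topped_chain1 y); rewrite cards1. Qed.

Lemma topped_chain_setU1 x y C : x < y -> topped_chain x C -> topped_chain y (y |: C).
Proof.
move=> /ltW xy /topped_chainP[ch xC top]; apply/topped_chainP; split.
- move=> u v /setU1P[->|uC] /setU1P[->|vC]; rewrite ?lexx //.
  + by rewrite (le_trans (top v vC) xy) orbT.
  + by rewrite (le_trans (top u uC) xy).
  + exact: ch.
- exact: setU11.
- by move=> z /setU1P[->|zC]; [apply: lexx | apply: le_trans (top z zC) xy].
Qed.

Lemma len_lt x y : x < y -> (len x < len y)%N.
Proof.
move=> xy; have [C xC <-] := len_topped_chain x.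
have yC : y \notin C.
  by apply: contraTN xy => yC; case/topped_chainP: xC => _ _ /(_ y yC) /le_gtF->.
apply: leq_trans (topped_chain_len (topped_chain_setU1 xy xC)).
by rewrite cardsU1 yC.
Qed.

Lemma topped_chain_setD1 y w C :
  topped_chain y C -> w \in pmax (C :\ y) -> topped_chain w (C :\ y).
Proof.
move=> /topped_chainP[ch _ _] /pmaxP[wCy wmax]; apply/topped_chainP; split=> //.
  by move=> u v /setD1P[_ uC] /setD1P[_ vC]; apply: ch.
move=> x xCy; case/setD1P: (wCy) => _ wC; case/setD1P: (xCy) => _ xC.
by case/orP: (ch w x wC xC) => // /(wmax x xCy)->.
Qed.

Lemma len_pred v : (1 < len v)%N -> exists2 w, w < v & (len v <= (len w).+1)%N.
Proof.
move=> lv; have [C vC cardC] := len_topped_chain v.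
have cardCv : #|C :\ v| = (len v).-1.
  by case/topped_chainP: (vC) => _ vinC _; rewrite -cardC (cardsD1 v C) vinC.
have [w0 w0C] : exists w0, w0 \in C :\ v.
  by apply/card_gt0P; rewrite cardCv -subn1 subn_gt0.
have [w wmax _] := exists_pmax_ge w0C.
exists w.
  case/topped_chainP: vC => _ _ top; case/pmaxP: wmax => /setD1P[wv wC] _.
  by rewrite lt_neqAle wv top.
have := topped_chain_len (topped_chain_setD1 vC wmax).
by rewrite cardCv -subn1 leq_subLR add1n.
Qed.

Lemma hierarchical_weakly_ordered : hierarchical (T:=T) -> weakly_ordered (T:=T).
Proof.
move=> hier a b c ab; apply: contraT; rewrite negb_or => /andP[nac ncb].
have [cb|bc] := ltnP (len c) (len b).
  have := hier c b; rewrite addn1 le_eqVlt (negbTE ncb) orbF => /(_ cb)/eqP c_eq_b.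
  by rewrite c_eq_b ab in nac.
have := hier a c; rewrite addn1 le_eqVlt (negbTE nac) orbF.
by move=> /(_ (leq_trans (len_lt ab) bc))/eqP a_eq_c; rewrite -a_eq_c ab in ncb.
Qed.

Lemma weakly_ordered_hierarchical : weakly_ordered (T:=T) -> hierarchical (T:=T).
Proof.
move=> wo u v; rewrite addn1 => uv.
have [w wv lvw] := len_pred (leq_ltn_trans (len_gt0 u) uv).
case/orP: (wo w v u wv) => [wu|/ltW //].
by have := len_lt wu; rewrite ltnNge -ltnS (leq_trans uv lvw).
Qed.

Lemma hierarchicalP : hierarchical (T:=T) <-> weakly_ordered (T:=T).
Proof.
by split; [apply: hierarchical_weakly_ordered | apply: weakly_ordered_hierarchical].
Qed.

End Height.

Section Duality.
Context {disp : Order.disp_t} {T : finPOrderType disp}.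

Lemma weakly_ordered_dual : weakly_ordered (T:=T^d) <-> weakly_ordered (T:=T).
Proof. by split=> wo a b c ab; rewrite orbC; apply: wo. Qed.

Lemma is_ideal_dual (D : {set T}) : is_ideal (T:=T^d) D = is_upset D.
Proof.
apply/is_idealP/forallP => [down x|up x y yD xy].
  by apply/forallP => y; apply/implyP => /andP[xD xy]; apply: down xD xy.
by move/forallP/(_ x)/implyP: (up y); apply; rewrite yD; apply: xy.
Qed.

Lemma ideal_card_pmax_card_dual :
  ideal_card_pmax_card (T:=T^d) <->
  forall D B : {set T}, is_upset D -> is_upset B ->
    #|D| = #|B| -> #|pmin D| = #|pmin B|.
Proof.
by split=> inv D B; [rewrite -!is_ideal_dual | rewrite !is_ideal_dual]; apply: inv.
Qed.

Lemma cut_nonmax_le_max_dual :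
  cut_nonmax_le_max (T:=T^d) <->
  forall B : {set T}, (forall a b, a \notin B -> b \in B -> a <= b) ->
    forall c d, c \in pmin B -> d \in B :\: pmin B -> c <= d.
Proof.
by split=> cut B cutB c d cmin dB; apply: (cut B) dB cmin => a b aB bB; apply: cutB.
Qed.

End Duality.

Theorem lemma2p6 (disp : Order.disp_t) (T : finPOrderType disp) :
  let P1 := @hierarchical disp T in
  let P2 := forall D B : {set T}, is_upset D -> is_upset B ->
              #|D| = #|B| -> #|pmin D| = #|pmin B| in
  let P3 := forall A : {set T},
              (forall a b, a \in A -> b \notin A -> a <= b) ->
              forall c d, c \in A :\: pmax A -> d \in pmax A -> c <= d in
  let P4 := forall I J : {set T}, is_ideal I -> is_ideal J ->
              #|I| = #|J| -> #|pmax I| = #|pmax J| in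
  let P5 := forall B : {set T},
              (forall a b, a \notin B -> b \in B -> a <= b) ->
              forall c d, c \in pmin B -> d \in B :\: pmin B -> c <= d in
  [/\ P1 <-> P2, P1 <-> P3, P1 <-> P4 & P1 <-> P5].
Proof.
move=> P1 P2 P3 P4 P5.
have wo : P1 <-> weakly_ordered (T:=T) := hierarchicalP.
have wo_dual : P1 <-> weakly_ordered (T:=T^d).
  exact: iff_trans wo (iff_sym weakly_ordered_dual).
split.
- exact: iff_trans wo_dual (iff_trans weakly_ordered_idealP ideal_card_pmax_card_dual).
- exact: iff_trans wo weakly_ordered_cutP.
- exact: iff_trans wo weakly_ordered_idealP.
- exact: iff_trans wo_dual (iff_trans weakly_ordered_cutP cut_nonmax_le_max_dual).
Qed.
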